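(* Let $p(x)$, $q(x)$, $r(x)$ be probability mass functions on the same finite support set $\mathcal{X}$. Let $c_1=\min_{x\in\mathcal{X}}\frac{p(x)(1-p(x))}{3(1+p(x))^2}$ and $p_m=\min_{x}p(x)$, and assume $c_1>0$ and $p_m>0$. Suppose $D_{\mathsf{KL}}(p\|q)\le\tau\le c_1$ and that for all $x\in\mathcal{X}$, $\gamma_1\le \frac{p(x)}{r(x)}\le\gamma_2$. Then for all $x\in\mathcal{X}$, with $g(\tau,p_m)=\sqrt{3\tau/p_m}$, \[ \gamma_1\exp\big(-g(\tau,p_m)\big)\le\frac{q(x)}{r(x)}\le\gamma_2\exp\big(g(\tau,p_m)\big). \]
   Context: $D_{\mathsf{KL}}(p\|q)=\sum_x p(x)\log\frac{p(x)}{q(x)}$ is the Kullback–Leibler divergence. *)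

From mathcomp Require Import all_boot all_order all_algebra.
From mathcomp Require Import all_classical all_reals all_analysis.
Set Implicit Arguments. Unset Strict Implicit. Unset Printing Implicit Defensive.
Import Order.TTheory GRing.Theory Num.Theory.
Local Open Scope ring_scope.

Definition pmf_full_support (R : realType) (T : finType) (p : T -> R) : Prop :=
  (forall x, 0 < p x) /\ \sum_(x : T) p x = 1.

Definition KL (R : realType) (T : finType) (p q : T -> R) : R :=
  \sum_(x : T) p x * ln (p x / q x).

Definition is_min_over (R : realType) (T : finType) (f : T -> R) (m : R) : Prop :=
  (exists x, m = f x) /\ (forall x, m <= f x).

Definition gfun (R : realType) (tau pm : R) : R := Num.sqrt (3 * tau / pm).

From mathcomp Require Import all_boot all_order all_algebra.
From mathcomp Require Import all_classical all_reals all_analysis.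
From mathcomp Require Import ring lra.
Set Implicit Arguments. Unset Strict Implicit. Unset Printing Implicit Defensive.
Import Order.TTheory GRing.Theory Num.Theory.
Local Open Scope ring_scope.

(* Write [q = p e^l] with [l = ln (q/p)]. Since [sum q = sum p], the divergence
   is [KL p q = sum_x p(x) (e^l(x) - 1 - l(x))], a sum of nonnegative terms, so
   each term is at most [tau <= c1 < p(x)/3]. The convex gap [e^l - 1 - l]
   dominates [l^2/3] as soon as it is below [1/3], whence
   [l(x)^2 <= 3 tau / p(x) <= 3 tau / p_m], i.e. [|l(x)| <= g(tau, p_m)], and
   [q(x)/r(x) = e^l(x) p(x)/r(x)] inherits the bounds on [p(x)/r(x)]. *)

Section ExpGap.
Variable R : realType.
Implicit Types l z : R.

Definition expR_gap l : R := expR l - 1 - l.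

Lemma expR_gap_ge0 l : 0 <= expR_gap l.
Proof. by have := expR_ge1Dx l; rewrite /expR_gap; lra. Qed.

Lemma expr1D8_ge_quadratic z : -1/8 <= z -> 1 + 8 * z + 64/3 * z ^+ 2 <= (1 + z) ^+ 8.
Proof.
move=> z_ge; rewrite -subr_ge0.
have -> : (1 + z) ^+ 8 - (1 + 8 * z + 64/3 * z ^+ 2) =
    z ^+ 2 * (20/3 + 56 * z + 70 * z ^+ 2 + 56 * z ^+ 3 + 28 * z ^+ 4 + 8 * z ^+ 5 + z ^+ 6).
  by rewrite !exprS expr0; field.
apply: mulr_ge0; first exact: sqr_ge0.
have [z_ge0|z_lt0] := lerP 0 z.
  have := sqr_ge0 z; have := exprn_ge0 3 z_ge0; have := exprn_ge0 4 z_ge0.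
  have := exprn_ge0 5 z_ge0; have := exprn_ge0 6 z_ge0; lra.
rewrite !exprS expr0 !mulr1; nra.
Qed.

(* Via [e^l = (e^(l/8))^8 >= (1 + l/8)^8]; exponent 8 is the least power of two
   for which the polynomial bound reaches down to [l = -1]. *)
Lemma expR_ge_quadratic l : -1 <= l -> 1 + l + l ^+ 2 / 3 <= expR l.
Proof.
move=> hl.
have -> : 1 + l + l ^+ 2 / 3 = 1 + 8 * (l / 8) + 64/3 * (l / 8) ^+ 2.
  by rewrite expr2; field.
apply: (le_trans (@expr1D8_ge_quadratic (l / 8) _)); first lra.
have -> : expR l = expR (l / 8) ^+ 8 by rewrite -expRM_natr; congr expR; field.
apply: lerXn2r; rewrite ?nnegrE ?expR_ge0 ?expR_ge1Dx //; lra.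
Qed.

Lemma expR_gap_ge_third l : l <= -1 -> 1/3 <= expR_gap l.
Proof.
move=> hl.
have e1 : 1/3 <= expR (-1) :> R.
  by have := @expR_ge_quadratic (-1) (lexx _); rewrite expr2; lra.
have e1_le1 : expR (-1) <= 1 :> R by rewrite expR_le1; lra.
have shift : expR (-1) * (1 + (l + 1)) <= expR l.
  rewrite -[X in _ <= X](_ : expR (-1) * expR (l + 1) = _); last first.
    by rewrite -expRD; congr expR; ring.
  by apply: ler_wpM2l; [exact: expR_ge0 | exact: expR_ge1Dx].
rewrite /expR_gap; nra.
Qed.

Lemma sqr_le_expR_gap l : expR_gap l < 1/3 -> l ^+ 2 <= 3 * expR_gap l.
Proof.
move=> small; have l_gt : -1 < l.
  by rewrite ltNge; apply/negP => /expR_gap_ge_third; lra.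
by have := expR_ge_quadratic (ltW l_gt); rewrite /expR_gap; lra.
Qed.

Lemma sqr_le_of_weighted_expR_gap (a m tau l : R) :
  0 < m -> m <= a -> a * expR_gap l <= tau -> 3 * tau < a -> l ^+ 2 <= 3 * tau / m.
Proof.
move=> m_gt0 m_le_a gap_le tau_lt; have a_gt0 : 0 < a by lra.
have gap_ge0 := expR_gap_ge0 l.
have tau_ge0 : 0 <= tau by have := mulr_ge0 (ltW a_gt0) gap_ge0; lra.
have gap_small : expR_gap l < 1/3.
  rewrite ltNge; apply/negP => big.
  by have := ler_wpM2l (ltW a_gt0) big; lra.
apply: (@le_trans _ _ (3 * tau / a)).
  rewrite ler_pdivlMr //.
  by have := ler_wpM2r (ltW a_gt0) (sqr_le_expR_gap gap_small); lra.
by apply: ler_wpM2l; [lra | rewrite lef_pV2 ?posrE].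
Qed.

End ExpGap.

Section KLDivergence.
Variables (R : realType) (T : finType) (p q : T -> R).
Hypotheses (p_gt0 : forall x, 0 < p x) (q_gt0 : forall x, 0 < q x).
Hypothesis sum_pq : \sum_x p x = \sum_x q x.

Lemma KL_sum_expR_gap : KL p q = \sum_x p x * expR_gap (ln (q x / p x)).
Proof.
have expR_ln x : expR (ln (q x / p x)) = q x / p x by rewrite lnK // posrE divr_gt0.
rewrite (_ : \sum_x _ = \sum_x q x - \sum_x p x - \sum_x p x * ln (q x / p x)).
  rewrite sum_pq subrr sub0r /KL -sumrN; apply: eq_bigr => x _.
  by rewrite -mulrN -lnV ?posrE ?divr_gt0 // invf_div.
rewrite -!sumrB; apply: eq_bigr => x _.
by rewrite /expR_gap expR_ln; field; rewrite gt_eqF.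
Qed.

Lemma KL_ge_term x : p x * expR_gap (ln (q x / p x)) <= KL p q.
Proof.
rewrite KL_sum_expR_gap (bigD1 x) //= lerDl; apply: sumr_ge0 => y _.
exact: mulr_ge0 (ltW (p_gt0 y)) (expR_gap_ge0 _).
Qed.

End KLDivergence.

Lemma c1_term_lt_third (R : realType) (a : R) :
  0 < a -> a * (1 - a) / (3 * (1 + a) ^+ 2) < a / 3.
Proof.
move=> a_gt0; have den_gt0 : 0 < 3 * (1 + a) ^+ 2.
  by apply: mulr_gt0 => //; apply: exprn_gt0; lra.
rewrite ltr_pdivrMr // mulrAC ltr_pdivlMr // expr2; nra.
Qed.

Lemma expR_mul_bounds (R : realType) (a l g gamma1 gamma2 : R) :
  0 <= a -> gamma1 <= a -> a <= gamma2 -> `|l| <= g ->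
  gamma1 * expR (- g) <= expR l * a /\ expR l * a <= gamma2 * expR g.
Proof.
move=> a_ge0 g1 g2; rewrite ler_norml => /andP[lo hi]; split.
  apply: (@le_trans _ _ (a * expR (- g))); first by rewrite ler_wpM2r ?expR_ge0.
  by rewrite mulrC ler_wpM2r // ler_expR.
apply: (@le_trans _ _ (expR g * a)); first by rewrite ler_wpM2r // ler_expR.
by rewrite mulrC ler_wpM2r ?expR_ge0.
Qed.

Theorem lemma1 (R : realType) (T : finType) (p q r : T -> R)
    (c1 pm tau gamma1 gamma2 : R) :
  pmf_full_support p -> pmf_full_support q -> pmf_full_support r ->
  is_min_over (fun x => p x * (1 - p x) / (3 * (1 + p x) ^+ 2)) c1 ->
  is_min_over p pm ->
  0 < c1 -> 0 < pm ->
  KL p q <= tau -> tau <= c1 ->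
  (forall x, gamma1 <= p x / r x /\ p x / r x <= gamma2) ->
  forall x, gamma1 * expR (- gfun tau pm) <= q x / r x /\
            q x / r x <= gamma2 * expR (gfun tau pm).
Proof.
move=> [p_gt0 p_sum1] [q_gt0 q_sum1] [r_gt0 _] [_ c1_min] [_ pm_min] _ pm_gt0
  KL_le tau_le bounds x.
set l := ln (q x / p x).
have term_le : p x * expR_gap l <= tau.
  by apply: le_trans (KL_ge_term p_gt0 q_gt0 _ x) KL_le; rewrite p_sum1 q_sum1.
have tau_lt : 3 * tau < p x.
  by have := c1_term_lt_third (p_gt0 x); have := c1_min x; lra.
have l_sqr := sqr_le_of_weighted_expR_gap pm_gt0 (pm_min x) term_le tau_lt.
have l_norm : `|l| <= gfun tau pm by rewrite /gfun -sqrtr_sqr ler_wsqrtr.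
have -> : q x / r x = expR l * (p x / r x).
  rewrite /l lnK ?posrE ?divr_gt0 //.
  by field; rewrite !gt_eqF.
have [g1 g2] := bounds x.
exact: expR_mul_bounds (divr_ge0 (ltW (p_gt0 x)) (ltW (r_gt0 x))) g1 g2 l_norm.
Qed.
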